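(* Let $D$ be a finite-dimensional central division algebra over a field $F$ of characteristic $0$ with involution $\ast$, and let $K$ be a maximal subfield of $D$ with $K^\ast\subseteq K$. Then there exists a map $f\colon D\to K$ such that $f(1)=1$, $f(z^\ast)=f(z)^\ast$ for all $z\in D$, and $f(kzl)=kf(z)l$ for all $k,l\in K$ and $z\in D$ (in particular $f$ is additive).
   Context: A maximal subfield is a subfield equal to its own centralizer in $D$. An involution is an additive anti-automorphism of order at most $2$. *)

From HB Require Import structures.
From mathcomp Require Import all_boot all_order all_algebra all_field.
Set Implicit Arguments. Unset Strict Implicit. Unset Printing Implicit Defensive.
Import GRing.Theory.
Local Open Scope ring_scope.

Definition is_division_alg (F : fieldType) (D : falgType F) : Prop :=
  forall x : D, x != 0 -> x \is a GRing.unit.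

Definition is_central_alg (F : fieldType) (D : falgType F) : Prop :=
  ('Z(fullv : {vspace D}))%VS = 1%VS.

(* An involution: an additive anti-automorphism of order at most 2
   (not required to be F-linear). *)
Definition is_involution (F : fieldType) (D : falgType F) (s : D -> D) : Prop :=
  [/\ forall x y, s (x + y) = s x + s y,
      forall x y, s (x * y) = s y * s x &
      forall x, s (s x) = x].

Definition is_maximal_subfield (F : fieldType) (D : falgType F)
    (K : {aspace D}) : Prop :=
  (forall x : D, x \in K -> x != 0 -> x^-1 \in K) /\
  ('C(K : {vspace D}))%VS = (K : {vspace D}).

From HB Require Import structures.
From mathcomp Require Import all_boot all_order all_algebra all_field.
Import GRing.Theory.
Local Open Scope ring_scope.

(* Let Tr be the trace form of the F-algebra D, i.e. the trace
   of right multiplication; it is F-linear and satisfies Tr(xy) = Tr(yx).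
   In characteristic 0 we have Tr 1 = dim D <> 0, so for every nonzero a in
   K, Tr(a * a^-1) <> 0: the pairing (a, k) |-> Tr(a k) is nondegenerate on
   K.  Hence every z in D has a unique "trace projection" p(z) in K with
   Tr(p(z) k) = Tr(z k) for all k in K.  By uniqueness and the cyclicity of
   Tr, p is additive, fixes K pointwise and satisfies p(kzl) = k p(z) l.
   Finally p is symmetrized with respect to the involution s:
   f(z) = (p(z) + s(p(s z))) / 2 keeps all these properties and commutes
   with s.  Only 1 \in K is taken from the maximality of K (1 centralizes
   K). *)

Lemma raddfZ_natV (F : fieldType) (U V : lmodType F) (h : {additive U -> V})
    (n : nat) (u : U) :
  n%:R != 0 :> F -> h (n%:R^-1 *: u) = n%:R^-1 *: h u.
Proof.
move=> n_neq0; have := raddfZnat h n (n%:R^-1 *: u).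
by rewrite scalerA mulfV // scale1r => ->; rewrite scalerA mulVf // scale1r.
Qed.

Section TraceForm.
Variables (F : fieldType) (D : falgType F).
Local Notation e := (vbasis (fullv : {vspace D})).

Definition trace_form (x : D) : F := \tr (passmx.mxof e e (amulr x)).

Lemma trace_form_is_linear : linear_for *%R trace_form.
Proof.
move=> c x y; rewrite /trace_form linearP /=.
by rewrite (passmx.mxof_linear e e c) mxtraceD mxtraceZ.
Qed.
HB.instance Definition _ := GRing.isSemilinear.Build F D F _ trace_form
  (GRing.semilinear_linear trace_form_is_linear).

Lemma amulrM (x y : D) : amulr (x * y) = (amulr y \o amulr x)%VF.
Proof. by apply/lfunP => w; rewrite comp_lfunE !lfunE /= mulrA. Qed.

Lemma trace_formC (x y : D) : trace_form (x * y) = trace_form (y * x).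
Proof.
rewrite /trace_form !amulrM !(passmx.mxof_comp e e (vbasisP _)).
exact: mxtrace_mulC.
Qed.

Lemma trace_form1 : trace_form 1 = (\dim (fullv : {vspace D}))%:R.
Proof.
rewrite /trace_form.
have -> : amulr (1 : D) = \1%VF by apply/lfunP => w; rewrite !lfunE /= mulr1.
by rewrite passmx.mxof1 ?mxtrace1 // (basis_free (vbasisP _)).
Qed.

Lemma trace_form1_neq0 : [pchar F] =i pred0 -> trace_form 1 != 0.
Proof.
move=> char0; rewrite trace_form1 (pcharf0P F).1 // dimv_eq0.
apply: contra_neq (oner_neq0 D) => full0.
by apply/eqP; rewrite -memv0 -full0 memvf.
Qed.

End TraceForm.

Arguments trace_form {F D}.
Local Notation Tr := trace_form.

Section TraceProjection.
Variables (F : fieldType) (D : falgType F) (K : {aspace D}).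
Hypothesis K_div : forall x, x \in K -> x != 0 ->
  x \is a GRing.unit /\ x^-1 \in K.
Hypothesis Tr1_neq0 : Tr (1 : D) != 0.

Local Notation b := (vbasis (K : {vspace D})).
Local Notation m := (\dim (K : {vspace D})).

Lemma vbasisK (i : 'I_m) : b`_i \in K.
Proof. by apply: vbasis_mem; apply: mem_nth; rewrite size_tuple. Qed.

(* The trace form restricted to K is nondegenerate: a nonzero a in K pairs
   to Tr 1 <> 0 with its inverse. *)
Lemma trace_form_nondegenerate a : a \in K ->
  (forall k, k \in K -> Tr (a * k) = 0) -> a = 0.
Proof.
move=> aK aK0; apply/eqP; apply: contraNT Tr1_neq0 => a_neq0.
have [a_unit aVK] := K_div a aK a_neq0.
by rewrite -(mulrV a_unit) aK0.
Qed.

Definition trace_coord (a : D) : D := \sum_(i < m) Tr (a * b`_i) *: b`_i.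

Lemma trace_coord_is_linear : linear trace_coord.
Proof.
move=> c x y; rewrite /trace_coord scaler_sumr -big_split /=.
by apply: eq_bigr => i _; rewrite mulrDl -scalerAl linearP scalerDl scalerA.
Qed.
HB.instance Definition _ := GRing.isSemilinear.Build F D D _ trace_coord
  (GRing.semilinear_linear trace_coord_is_linear).

Lemma trace_coordK a : trace_coord a \in K.
Proof. by apply: rpred_sum => i _; apply: rpredZ; apply: vbasisK. Qed.

Lemma trace_coord_eq0 a : trace_coord a = 0 ->
  forall k, k \in K -> Tr (a * k) = 0.
Proof.
move=> coord0 k /coord_vbasis ->; rewrite mulr_sumr linear_sum big1 // => i _.
have /freeP coord_b := basis_free (vbasisP (K : {vspace D})).
by rewrite -scalerAr linearZ /= (coord_b _ coord0) mulr0.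
Qed.

(* trace_coord is injective on K, hence maps K onto K by a dimension count. *)
Lemma trace_coord_onto z : exists a, (a \in K) && (trace_coord a == trace_coord z).
Proof.
pose h : 'End(D) := linfun trace_coord.
have ker0 : (K :&: lker h)%VS = 0%VS.
  apply/eqP; rewrite -subv0; apply/subvP => v.
  rewrite memv_cap memv_ker lfunE memv0 => /andP[vK /eqP hv].
  by apply/eqP/trace_form_nondegenerate => //; apply: trace_coord_eq0.
have hK_sub : (h @: K <= K)%VS.
  by apply/subvP => v /memv_imgP [u _ ->]; rewrite lfunE trace_coordK.
have hK : (h @: K)%VS = K :> {vspace D}.
  by apply/eqP; rewrite -(dimv_leqif_eq hK_sub).2 limg_dim_eq.
have : h z \in (h @: K)%VS by rewrite hK lfunE trace_coordK.
case/memv_imgP => a aK; rewrite !lfunE /= => coord_eq.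
by exists a; rewrite aK coord_eq eqxx.
Qed.

(* The trace projection of z onto K: the element of K representing the
   functional k |-> Tr(z k) through the trace pairing. *)
Definition trace_proj (z : D) : D := xchoose (trace_coord_onto z).

Lemma trace_projK z : trace_proj z \in K.
Proof. by case/andP: (xchooseP (trace_coord_onto z)). Qed.

Lemma trace_projP z k : k \in K -> Tr (trace_proj z * k) = Tr (z * k).
Proof.
case/andP: (xchooseP (trace_coord_onto z)) => _ /eqP coord_eq kK.
apply/eqP; rewrite -subr_eq0 -linearB -mulrBl /=.
by rewrite (trace_coord_eq0 _ _ _ kK) // linearB /= coord_eq subrr.
Qed.

Lemma trace_proj_eq z a : a \in K ->
  (forall k, k \in K -> Tr (a * k) = Tr (z * k)) -> trace_proj z = a.
Proof.
move=> aK a_pairs; apply/eqP; rewrite -subr_eq0; apply/eqP.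
apply: trace_form_nondegenerate => [|k kK]; first by rewrite rpredB ?trace_projK.
by rewrite mulrBl linearB /= trace_projP // a_pairs // subrr.
Qed.

Lemma trace_projD x y : trace_proj (x + y) = trace_proj x + trace_proj y.
Proof.
apply: trace_proj_eq => [|k kK]; first by rewrite rpredD ?trace_projK.
by rewrite !mulrDl !linearD /= !trace_projP.
Qed.

Lemma trace_proj_id k : k \in K -> trace_proj k = k.
Proof. by move=> kK; apply: trace_proj_eq. Qed.

(* trace_proj is a K-bimodule map; this uses the cyclicity of Tr. *)
Lemma trace_projM k l z : k \in K -> l \in K ->
  trace_proj (k * z * l) = k * trace_proj z * l.
Proof.
move=> kK lK; apply: trace_proj_eq => [|k' k'K].
  by rewrite !memvM ?trace_projK.
rewrite -!mulrA trace_formC [Tr (k * _)]trace_formC -!mulrA trace_projP //.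
by rewrite !memvM.
Qed.

End TraceProjection.

Arguments trace_proj {F D K} K_div Tr1_neq0 z.

Section Symmetrization.
Variables (F : fieldType) (D : falgType F) (K : {aspace D}) (s : D -> D).
Hypothesis char0 : [pchar F] =i pred0.
Hypotheses (sD : forall x y, s (x + y) = s x + s y)
  (sM : forall x y, s (x * y) = s y * s x) (sK : forall x, s (s x) = x).
Hypothesis s_K : forall k, k \in K -> s k \in K.

Lemma involution0 : s 0 = 0.
Proof. by apply: (addrI (s 0)); rewrite -sD !addr0. Qed.

HB.instance Definition _ := GRing.isNmodMorphism.Build D D s (involution0, sD).

Lemma involution1 : s 1 = 1.
Proof. by have := sM (s 1) 1; rewrite !sK mulr1 => <-. Qed.

Definition symmetrize (p : D -> D) (z : D) : D :=
  (2%:R^-1 : F) *: (p z + s (p (s z))).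

Variable p : D -> D.
Hypotheses (pK : forall z, p z \in K) (p1 : p 1 = 1)
  (pD : forall x y, p (x + y) = p x + p y)
  (pM : forall k l z, k \in K -> l \in K -> p (k * z * l) = k * p z * l).

Lemma symmetrize_bimodule_proj :
  [/\ forall z, symmetrize p z \in K,
      symmetrize p 1 = 1,
      forall z, symmetrize p (s z) = s (symmetrize p z),
      forall k l z, k \in K -> l \in K ->
        symmetrize p (k * z * l) = k * symmetrize p z * l &
      forall x y, symmetrize p (x + y) = symmetrize p x + symmetrize p y].
Proof.
have two_neq0 : 2%:R != 0 :> F by rewrite (pcharf0P F).1.
rewrite /symmetrize; split.
- by move=> z; rewrite rpredZ // rpredD ?s_K.
- by rewrite involution1 p1 involution1 -[1 + 1]/(1 *+ 2) -scaler_nat scalerA mulVf ?scale1r.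
- by move=> z; rewrite raddfZ_natV //= sK sD sK addrC.
- move=> k l z kK lK.
  rewrite -scalerAr -scalerAl; congr (_ *: _).
  have s_kzl : s (k * z * l) = s l * s z * s k by rewrite !sM mulrA.
  by rewrite s_kzl !pM ?s_K // !sM !sK mulrDr mulrDl !mulrA.
- by move=> x y; rewrite -scalerDr sD !pD sD addrACA.
Qed.

End Symmetrization.

Arguments symmetrize {F D} s p z.

Theorem proposition2p3 (F : fieldType) (D : falgType F) (s : D -> D)
    (K : {aspace D}) :
  [pchar F] =i pred0 ->
  is_division_alg D ->
  is_central_alg D ->
  is_involution s ->
  is_maximal_subfield K ->
  (forall k : D, k \in K -> s k \in K) ->
  exists f : D -> D,
    [/\ forall z, f z \in K,
        f 1 = 1,
        forall z, f (s z) = s (f z),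
        forall k l z, k \in K -> l \in K -> f (k * z * l) = k * f z * l &
        forall x y, f (x + y) = f x + f y].
Proof.
move=> char0 D_div _ [sD sM sK] [K_inv CK] s_K.
have K1 : 1 \in K by rewrite -CK centv1.
have K_div x : x \in K -> x != 0 -> x \is a GRing.unit /\ x^-1 \in K.
  by move=> xK x_neq0; split; [apply: D_div | apply: K_inv].
have Tr1_neq0 := @trace_form1_neq0 F D char0.
exists (symmetrize s (trace_proj K_div Tr1_neq0)).
apply: symmetrize_bimodule_proj => //.
- exact: trace_projK.
- exact: trace_proj_id.
- exact: trace_projD.
- exact: trace_projM.
Qed.
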